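(* Let $g,h\in G(\Gamma)$ and $v\in\Gamma$, and suppose $h$ does not end with $G(\mathrm{lk}(v))$. (1) If $h^{-1}$ begins with $G_v$ but $h^{-1}g$ does not begin with $G_v$, then there is a reduced word $g\equiv g_1\cdots g_n$ and some $m\le n$ such that $h\equiv g_1\cdots g_m$ and $g_m\in G_v$. (2) If $h^{-1}g$ begins with $G_v$ but $h^{-1}$ does not begin with $G_v$, then there is a reduced word $g\equiv g_1\cdots g_n$ and some $m<n$ such that $h\equiv g_1\cdots g_m$ and $g_{m+1}\in G_v$.
   Context: $G(\Gamma)$ is the graph product of groups $\{G_v\}_{v\in\Gamma}$ over a finite simplicial graph $\Gamma$ (the quotient of $\ast_vG_v$ by the normal subgroup generated by $[G_v,G_w]$ for edges $[vw]$). $\mathrm{lk}(v)$ is the set of vertices adjacent to $v$. Words, syllables, shuffles and reduced words are as usual for graph products: a word $(g_1,\dots,g_n)$, $g_i\in G_{v_i}$, is reduced if it cannot be shortened by swapping consecutive syllables from adjacent vertex groups, merging consecutive syllables from the same vertex group, or deleting identity syllables; $g\equiv g_1\cdots g_n$ means this is a reduced word for $g$, and reduced words of $g$ differ by shuffles. An element $g$ begins (resp. ends) with $G_v$ if some reduced word for $g$ has its first (resp. last) syllable in $G_v$; $g$ ends with $G(\mathrm{lk}(v))$ if some reduced word for $g$ has its last syllable in $G_w$ for some $w\in\mathrm{lk}(v)$. *)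

From mathcomp Require Import all_boot.
Set Implicit Arguments. Unset Strict Implicit. Unset Printing Implicit Defensive.

Record Grp := {
  gcarrier :> Type;
  gmul : gcarrier -> gcarrier -> gcarrier;
  gone : gcarrier;
  ginv : gcarrier -> gcarrier;
  gmulA : forall x y z, gmul x (gmul y z) = gmul (gmul x y) z;
  gmul1 : forall x, gmul x gone = x;
  g1mul : forall x, gmul gone x = x;
  gmulV : forall x, gmul x (ginv x) = gone;
  gVmul : forall x, gmul (ginv x) x = gone
}.

Section GraphProduct.
Variables (V : finType) (adj : rel V) (G : V -> Grp).

Definition syllable := {v : V & G v}.
Definition word := seq syllable.
Definition svert (s : syllable) : V := projT1 s.

Inductive swap_step : word -> word -> Prop :=
| SwapStep u t v1 v2 (a : G v1) (b : G v2) : adj v1 v2 ->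
    swap_step (u ++ existT _ v1 a :: existT _ v2 b :: t)
              (u ++ existT _ v2 b :: existT _ v1 a :: t).

Inductive gp_step : word -> word -> Prop :=
| GpDel u t v : gp_step (u ++ existT _ v (gone (G v)) :: t) (u ++ t)
| GpMerge u t v (a b : G v) :
    gp_step (u ++ existT _ v a :: existT _ v b :: t)
            (u ++ existT _ v (gmul a b) :: t)
| GpSwap w w' : swap_step w w' -> gp_step w w'.

Inductive shuffle : word -> word -> Prop :=
| ShRefl w : shuffle w w
| ShStep w1 w2 w3 : swap_step w1 w2 -> shuffle w2 w3 -> shuffle w1 w3.

(* Two words represent the same element of G(Gamma): the equivalence
   relation generated by the moves (this is the standard monoid
   presentation of the graph product). *)
Inductive gp_equiv : word -> word -> Prop :=
| EqRefl w : gp_equiv w w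
| EqStep w1 w2 w3 : gp_step w1 w2 -> gp_equiv w2 w3 -> gp_equiv w1 w3
| EqStepInv w1 w2 w3 : gp_step w2 w1 -> gp_equiv w2 w3 -> gp_equiv w1 w3.

Definition reduced (w : word) : Prop :=
  forall w', shuffle w w' ->
    (forall u t (s : syllable), w' = u ++ s :: t -> projT2 s <> gone (G (projT1 s))) /\
    (forall u t (s1 s2 : syllable), w' = u ++ s1 :: s2 :: t -> svert s1 <> svert s2).

Definition winv (w : word) : word :=
  rev (map (fun s : syllable => existT _ (projT1 s) (ginv (projT2 s))) w).

Definition begins_with (v : V) (g : word) : Prop :=
  exists (s : syllable) (t : word),
    reduced (s :: t) /\ gp_equiv (s :: t) g /\ svert s = v.

Definition ends_with_lk (v : V) (g : word) : Prop :=
  exists (u : word) (s : syllable),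
    reduced (rcons u s) /\ gp_equiv (rcons u s) g /\ adj v (svert s).

End GraphProduct.

(* A word is reduced iff it has no identity syllable and no syllable can be
   shuffled next to a later syllable of the same vertex group.  For (1), write
   h = (h^-1)^-1 as a reduced word ending with a syllable of G_v and append a
   reduced word for h^-1 g.  A merge in the concatenation would involve a
   syllable of h that can be shuffled to the end of h: either the final G_v
   syllable itself, and then h^-1 g begins with G_v, or one commuting with it,
   and then h ends with G(lk(v)).  Part (2) is symmetric, with the G_v syllable
   now at the front of h^-1 g. *)
From Stdlib Require List Classical_Prop.
From mathcomp Require Import all_boot.
Set Implicit Arguments. Unset Strict Implicit. Unset Printing Implicit Defensive.

Section GroupInverse.
Variable K : Grp.

Lemma ginv1 : ginv (gone K) = gone K.
Proof. by rewrite -[LHS]gmul1 gVmul. Qed.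

Lemma ginvK (x : K) : ginv (ginv x) = x.
Proof. by rewrite -[LHS]gmul1 -(gVmul x) gmulA gVmul g1mul. Qed.

End GroupInverse.

Section GraphProductWords.
Variables (V : finType) (adj : rel V) (G : V -> Grp).
Hypothesis adj_sym : symmetric adj.
Notation syl := (syllable G).
Notation wrd := (word G).

Lemma shuffle_trans (w1 w2 w3 : wrd) :
  shuffle adj w1 w2 -> shuffle adj w2 w3 -> shuffle adj w1 w3.
Proof. by elim=> [//|a b c Hs _ IH] H3; exact: ShStep Hs (IH H3). Qed.

Lemma swap_step_sym (w w' : wrd) : swap_step adj w w' -> swap_step adj w' w.
Proof. by case=> u t v1 v2 a b H; apply: SwapStep; rewrite adj_sym. Qed.

Lemma shuffle_sym (w w' : wrd) : shuffle adj w w' -> shuffle adj w' w.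
Proof.
elim=> [w0|a b c Hs _ IH]; first exact: ShRefl.
exact: shuffle_trans IH (ShStep (swap_step_sym Hs) (ShRefl _ _)).
Qed.

Lemma reduced_shuffle (w w' : wrd) : reduced adj w -> shuffle adj w w' -> reduced adj w'.
Proof. by move=> Hw Hs w'' /(shuffle_trans Hs); exact: Hw. Qed.

Lemma gp_equiv_trans (w1 w2 w3 : wrd) :
  gp_equiv adj w1 w2 -> gp_equiv adj w2 w3 -> gp_equiv adj w1 w3.
Proof.
elim=> [//|a b c Hs _ IH|a b c Hs _ IH] H3;
  [exact: EqStep Hs (IH H3) | exact: EqStepInv Hs (IH H3)].
Qed.

Lemma gp_equiv_sym (w w' : wrd) : gp_equiv adj w w' -> gp_equiv adj w' w.
Proof.
elim=> [w0|a b c Hs _ IH|a b c Hs _ IH]; first exact: EqRefl.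
  exact: gp_equiv_trans IH (EqStepInv Hs (EqRefl _ _)).
exact: gp_equiv_trans IH (EqStep Hs (EqRefl _ _)).
Qed.

Lemma shuffle_gp_equiv (w w' : wrd) : shuffle adj w w' -> gp_equiv adj w w'.
Proof. by elim=> [w0|a b c Hs _ IH]; [exact: EqRefl | exact: EqStep (GpSwap Hs) IH]. Qed.

Lemma gp_step_cat (c d a b : wrd) :
  gp_step adj a b -> gp_step adj (c ++ a ++ d) (c ++ b ++ d).
Proof.
case=> [u t x|u t x p q|w w' [u t x y p q Hxy]];
  rewrite -!catA /= catA [c ++ (u ++ _)]catA.
- exact: GpDel.
- exact: GpMerge.
- by apply: GpSwap; apply: SwapStep.
Qed.

Lemma gp_equiv_cat (c d a b : wrd) :
  gp_equiv adj a b -> gp_equiv adj (c ++ a ++ d) (c ++ b ++ d).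
Proof.
elim=> [w0|x y z Hs _ IH|x y z Hs _ IH]; first exact: EqRefl.
  exact: EqStep (gp_step_cat c d Hs) IH.
exact: EqStepInv (gp_step_cat c d Hs) IH.
Qed.

Lemma gp_equiv_catl (c a b : wrd) : gp_equiv adj a b -> gp_equiv adj (c ++ a) (c ++ b).
Proof. by move/(gp_equiv_cat c [::]); rewrite !cats0. Qed.

Lemma gp_equiv_catr (d a b : wrd) : gp_equiv adj a b -> gp_equiv adj (a ++ d) (b ++ d).
Proof. exact: (gp_equiv_cat [::] d). Qed.

Lemma shuffle_to_front (pre m : wrd) (y : syl) (t : wrd) :
  all (adj (svert y) \o @svert V G) m ->
  shuffle adj (pre ++ m ++ y :: t) (pre ++ y :: m ++ t).
Proof.
elim: m pre => [|z m IH] pre /=; first by move=> _; exact: ShRefl.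
case/andP=> Hzy /(IH (rcons pre z)); rewrite -!cats1 -!catA /= => Hm {IH}.
apply: shuffle_trans Hm (ShStep _ (ShRefl _ _)).
by case: z Hzy => x a; case: y => x' b /= Hzy; apply: SwapStep; rewrite adj_sym.
Qed.

Lemma shuffle_to_back (pre : wrd) (y : syl) (m : wrd) :
  all (adj (svert y) \o @svert V G) m ->
  shuffle adj (pre ++ y :: m) (rcons (pre ++ m) y).
Proof.
by move/(shuffle_to_front pre [::])/shuffle_sym; rewrite cats0 -cats1 -catA.
Qed.

(* [merge_free x s]: a syllable of vertex x placed in front of a word with
   vertex sequence s can never be shuffled next to a syllable of vertex x. *)
Fixpoint merge_free (x : V) (s : seq V) : bool :=
  if s is z :: s' then (z != x) && (adj x z ==> merge_free x s') else true.

Fixpoint merge_free_seq (s : seq V) : bool :=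
  if s is x :: s' then merge_free x s' && merge_free_seq s' else true.

Definition nontrivial (s : syl) : Prop := projT2 s <> gone (G (svert s)).

Lemma merge_free_cat x s1 s2 :
  merge_free x (s1 ++ s2) = merge_free x s1 && (all (adj x) s1 ==> merge_free x s2).
Proof. by elim: s1 => [|z s1 IH] //=; rewrite IH; case: (z != x); case: (adj x z). Qed.

Lemma merge_freeN x (w : wrd) : merge_free x (map (@svert V G) w) = false ->
  exists m y t, w = m ++ y :: t /\ svert y = x /\ all (adj x \o @svert V G) m.
Proof.
elim: w => [|z w IH] //=.
case: eqP => [<- _|_ /=]; first by exists [::], z, w.
case Hxz: (adj x (svert z)) => //= /IH [m [y [t [-> [Ey Hm]]]]].
by exists (z :: m), y, t; rewrite /= Hxz Hm.
Qed.

Lemma merge_free_seqN (w : wrd) : merge_free_seq (map (@svert V G) w) = false ->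
  exists u x m y t, w = u ++ x :: m ++ y :: t /\ svert x = svert y /\
     all (adj (svert y) \o @svert V G) m.
Proof.
elim: w => [|x w IH] //=.
case Hx: (merge_free _ _) => /=.
  by move/IH=> [u [x' [m [y [t [-> Exy]]]]]]; exists (x :: u), x', m, y, t.
move=> _; have [m [y [t [-> [Ey Hm]]]]] := merge_freeN Hx.
by exists [::], x, m, y, t; rewrite Ey.
Qed.

Lemma merge_free_seq_swap a p q b : adj p q ->
  merge_free_seq (a ++ p :: q :: b) -> merge_free_seq (a ++ q :: p :: b).
Proof.
move=> Hpq; elim: a => [|c a IH] /=.
  case/andP=> /andP[Hqp Hb] /andP[Hqb ->]; move: Hb.
  by rewrite Hpq adj_sym Hpq /= Hqb eq_sym Hqp => ->.
case/andP=> Hc /IH ->; rewrite andbT; clear IH.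
elim: a Hc => [|d a IH] /=; last first.
  by case/andP=> -> /=; case: (adj c d) => //= /IH.
case/andP=> Hpc; case Hcp: (adj c p) => /=.
  by case/andP=> -> Hb; rewrite Hpc /=; case: (adj c q) Hb.
have Hqc : q != c by apply: contraFneq Hcp => <-; rewrite adj_sym.
by rewrite Hqc Hpc /=; case: (adj c q).
Qed.

Lemma merge_free_seq_neq a p q b : merge_free_seq (a ++ p :: q :: b) -> p != q.
Proof.
elim: a => [|c a IH] /=; last by case/andP=> _ /IH.
by case/andP=> /andP[H _] _; rewrite eq_sym.
Qed.

Lemma swap_step_reduced_invariant (w w' : wrd) : swap_step adj w w' ->
  List.Forall nontrivial w /\ merge_free_seq (map (@svert V G) w) ->
  List.Forall nontrivial w' /\ merge_free_seq (map (@svert V G) w').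
Proof.
case=> u t v1 v2 a b H [Hn Hm]; split.
  move: Hn => /List.Forall_app [Hu Ht]; inversion_clear Ht as [|? ? Ha Ht'].
  inversion_clear Ht' as [|? ? Hb Ht''].
  by apply/List.Forall_app; split=> //; constructor=> //; constructor.
by move: Hm; rewrite !map_cat; exact: merge_free_seq_swap.
Qed.

Lemma reducedP (w : wrd) :
  reduced adj w <-> List.Forall nontrivial w /\ merge_free_seq (map (@svert V G) w).
Proof.
split=> [Hw|Hwm w' Hs].
  split.
    have [Hn _] := Hw w (ShRefl _ _); apply/List.Forall_forall => s Hsw.
    by have [u [t Ew]] := List.in_split _ _ Hsw; exact: Hn Ew.
  case Hwm: (merge_free_seq _) => //.
  have [u [x [m [y [t [Ew [Exy Hm]]]]]]] := merge_free_seqN Hwm.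
  have := shuffle_to_front (rcons u x) t Hm; rewrite -cats1 -!catA /= -Ew => Hs.
  by have [_ /(_ u (m ++ t) x y erefl)] := Hw _ Hs.
have [Hn Hm] : List.Forall nontrivial w' /\ merge_free_seq (map (@svert V G) w').
  by elim: Hs Hwm => [//|a b c Hab _ IH] /(swap_step_reduced_invariant Hab).
split=> [u t s Ew'|u t s1 s2 Ew']; subst w'.
  by move/List.Forall_app: Hn => [_]; inversion 1.
by apply/eqP; move: Hm; rewrite map_cat; exact: merge_free_seq_neq.
Qed.

Lemma exists_reduced (w : wrd) : exists r, reduced adj r /\ gp_equiv adj r w.
Proof.
elim: {w}(size w).+1 {-2}w (ltnSn (size w)) => // n IH w Hw.
case: (Classical_Prop.classic (List.Forall nontrivial w)) => [Hn|Hn]; last first.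
  have [s Hsw Hs] : exists2 s, List.In s w & ~ nontrivial s.
    apply: Classical_Prop.NNPP => Hno; apply: Hn; apply/List.Forall_forall => s Hsw.
    by apply: Classical_Prop.NNPP => Hs; apply: Hno; exists s.
  have [u [t Ew]] := List.in_split _ _ Hsw; clear Hsw Hn.
  case: s Hs Ew => x a /Classical_Prop.NNPP /= -> Ew; subst w.
  have [|r [Hr Hre]] := IH (u ++ t); first by move: Hw; rewrite !size_cat addnS.
  exists r; split=> //.
  exact: gp_equiv_trans Hre (EqStepInv (GpDel adj u t x) (EqRefl _ _)).
case Hm: (merge_free_seq (map (@svert V G) w)).
  by exists w; split; [apply/reducedP | exact: EqRefl].
have [u [[x a] [m [[y b] [t [Ew [/= Exy Hmy]]]]]]] := merge_free_seqN Hm.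
subst y w; have := shuffle_to_front (u ++ [:: existT _ x a]) (y := existT _ x b) t Hmy.
rewrite -!catA /= => Hs.
have [|r [Hr Hre]] := IH (u ++ existT _ x (gmul a b) :: m ++ t).
  by move: Hw; rewrite !size_cat /= !size_cat /= !addnS.
exists r; split=> //; apply: gp_equiv_trans Hre (gp_equiv_sym _).
apply: gp_equiv_trans (shuffle_gp_equiv Hs) _.
exact: EqStep (GpMerge adj u (m ++ t) a b) (EqRefl _ _).
Qed.

(* A merge in [p ++ y] must come from a syllable of [p] that can be shuffled
   to the end of [p]. *)
Lemma reduced_cat (p y : wrd) : reduced adj p -> reduced adj y ->
  (forall p1 s p2, p = p1 ++ s :: p2 -> all (adj (svert s) \o @svert V G) p2 ->
     merge_free (svert s) (map (@svert V G) y)) ->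
  reduced adj (p ++ y).
Proof.
move=> /reducedP [Hpn Hpm] /reducedP [Hyn Hym] Hend.
apply/reducedP; split; first exact/List.Forall_app.
rewrite map_cat; elim: p Hpm Hend {Hpn} => [|x p IH] //= /andP [Hx Hp] Hend.
rewrite merge_free_cat Hx IH // => [|p1 s p2 Ep].
  by rewrite andbT; apply/implyP; rewrite all_map; exact: Hend [::] x p erefl.
by apply: (Hend (x :: p1)); rewrite Ep.
Qed.

Definition sinv (s : syl) : syl := existT _ (svert s) (ginv (projT2 s)).

Lemma sinvK : involutive sinv.
Proof. by case=> x a; rewrite /sinv /= ginvK. Qed.

Lemma winv_cat (a b : wrd) : winv (a ++ b) = winv b ++ winv a.
Proof. by rewrite /winv map_cat rev_cat. Qed.

Lemma winv_cons s (w : wrd) : winv (s :: w) = rcons (winv w) (sinv s).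
Proof. by rewrite /winv /= rev_cons. Qed.

Lemma winv_rcons s (w : wrd) : winv (rcons w s) = sinv s :: winv w.
Proof. by rewrite /winv map_rcons rev_rcons. Qed.

Lemma winvK : involutive (@winv V G).
Proof. by elim=> [|s w IH] //; rewrite winv_cons winv_rcons IH sinvK. Qed.

Lemma winv_cat1 u s (t : wrd) : winv (u ++ s :: t) = winv t ++ sinv s :: winv u.
Proof. by rewrite winv_cat winv_cons -cats1 -catA. Qed.

Lemma winv_cat2 u s1 s2 (t : wrd) :
  winv (u ++ s1 :: s2 :: t) = winv t ++ sinv s2 :: sinv s1 :: winv u.
Proof. by rewrite winv_cat1 winv_cons -cats1 -catA. Qed.

Lemma gp_equiv_mulV (w : wrd) : gp_equiv adj (w ++ winv w) [::].
Proof.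
elim: w => [|[x a] w IH] /=; first exact: EqRefl.
rewrite winv_cons -cats1 catA.
apply: gp_equiv_trans (gp_equiv_cat [:: existT _ x a] [:: sinv (existT _ x a)] IH) _.
apply: EqStep (GpMerge adj [::] [::] a (ginv a)) _; rewrite gmulV.
exact: EqStep (GpDel adj [::] [::] x) (EqRefl _ _).
Qed.

Lemma gp_equiv_Vmul (w : wrd) : gp_equiv adj (winv w ++ w) [::].
Proof. by have := gp_equiv_mulV (winv w); rewrite winvK. Qed.

Lemma gp_equiv_winv (a b : wrd) : gp_equiv adj a b -> gp_equiv adj (winv a) (winv b).
Proof.
move=> Hab.
have := gp_equiv_catl (winv a) (gp_equiv_sym (gp_equiv_mulV b)).
rewrite cats0 => /gp_equiv_trans; apply.
have Hba := gp_equiv_catr (winv b) (gp_equiv_sym Hab).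
apply: gp_equiv_trans (gp_equiv_catl (winv a) Hba) _.
by rewrite catA; exact: (gp_equiv_catr (winv b) (gp_equiv_Vmul a)).
Qed.

Lemma shuffle_winv (a b : wrd) : shuffle adj a b -> shuffle adj (winv a) (winv b).
Proof.
elim=> [w|x y z [u t v1 v2 p q Hv] _ IH]; first exact: ShRefl.
by apply: ShStep IH; rewrite !winv_cat2; apply: SwapStep; rewrite adj_sym.
Qed.

Lemma reduced_winv (w : wrd) : reduced adj w -> reduced adj (winv w).
Proof.
move=> Hw w' /shuffle_winv; rewrite winvK => /Hw [Hn Hm].
split=> [u t s Ew'|u t s1 s2 Ew']; subst w'.
  by move: (Hn _ _ _ (winv_cat1 u s t)) => /= Hs Es; apply: Hs; rewrite Es ginv1.
by move=> E; apply: (Hm _ _ _ _ (winv_cat2 u s1 s2 t)); rewrite /= E.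
Qed.

Lemma not_begins_with_merge_free (y w : wrd) x : reduced adj y -> gp_equiv adj y w ->
  ~ begins_with adj x w -> merge_free x (map (@svert V G) y).
Proof.
move=> Hy Hyw Hnb; case Hx: merge_free => //; case: Hnb.
have [m [s [t [Ey [Es Hm]]]]] := merge_freeN Hx.
have Hs : shuffle adj y (s :: m ++ t).
  by rewrite Ey; apply: (shuffle_to_front [::]); rewrite Es.
exists s, (m ++ t); split; first exact: reduced_shuffle Hs.
by split=> //; apply: gp_equiv_trans Hyw; exact: gp_equiv_sym (shuffle_gp_equiv Hs).
Qed.

Lemma ends_with_lk_shuffle_back (p1 p2 h : wrd) s x :
  reduced adj (p1 ++ s :: p2) -> gp_equiv adj (p1 ++ s :: p2) h ->
  all (adj (svert s) \o @svert V G) p2 -> adj x (svert s) -> ends_with_lk adj x h.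
Proof.
move=> Hp Hph Hs Hx; have Hsh := shuffle_to_back p1 Hs.
exists (p1 ++ p2), s; split; first exact: reduced_shuffle Hsh.
by split=> //; apply: gp_equiv_trans Hph; exact: gp_equiv_sym (shuffle_gp_equiv Hsh).
Qed.

Lemma gp_equiv_cat_winv (p h g y : wrd) :
  gp_equiv adj p h -> gp_equiv adj y (winv h ++ g) -> gp_equiv adj (p ++ y) g.
Proof.
move=> Hph Hy; apply: gp_equiv_trans (gp_equiv_catr y Hph) _.
apply: gp_equiv_trans (gp_equiv_catl h Hy) _.
by rewrite catA; exact: (gp_equiv_catr g (gp_equiv_mulV h)).
Qed.

Lemma reduced_prefix_last_vertex (g h : wrd) v :
  ~ ends_with_lk adj v h -> begins_with adj v (winv h) ->
  ~ begins_with adj v (winv h ++ g) ->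
  exists u s t, [/\ reduced adj (u ++ s :: t), gp_equiv adj (u ++ s :: t) g,
    reduced adj (rcons u s), gp_equiv adj (rcons u s) h & svert s = v].
Proof.
move=> Hnl [s [t [Hst [Esth Es]]]] Hnb.
have Hpr : reduced adj (rcons (winv t) (sinv s)).
  by rewrite -winv_cons; exact: reduced_winv.
have Hph : gp_equiv adj (rcons (winv t) (sinv s)) h.
  by rewrite -winv_cons -[h]winvK; exact: gp_equiv_winv.
have [y [Hy Hyg]] := exists_reduced (winv h ++ g).
exists (winv t), (sinv s), y; rewrite -cat_rcons.
split=> //; last exact: gp_equiv_cat_winv Hph Hyg.
apply: reduced_cat => // p1 s' p2; case/lastP: p2 => [|p2 z].
  rewrite cats1 => /rcons_inj [_ <-] _ /=; rewrite Es.
  exact: not_begins_with_merge_free Hy Hyg Hnb.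
rewrite -rcons_cons -rcons_cat => Ep Hs'.
have [_ Ez] := rcons_inj Ep; rewrite rcons_cat rcons_cons in Ep.
have Hv : adj v (svert s').
  by move: Hs'; rewrite all_rcons adj_sym -Ez /= Es => /andP [].
by case: Hnl; rewrite Ep in Hpr Hph; exact: ends_with_lk_shuffle_back Hpr Hph Hs' Hv.
Qed.

Lemma reduced_prefix_next_vertex (g h : wrd) v :
  ~ ends_with_lk adj v h -> begins_with adj v (winv h ++ g) ->
  ~ begins_with adj v (winv h) ->
  exists u s t, [/\ reduced adj (u ++ s :: t), gp_equiv adj (u ++ s :: t) g,
    reduced adj u, gp_equiv adj u h & svert s = v].
Proof.
move=> Hnl [s [t [Hst [Esthg Es]]]] Hnb.
have [p [Hp Hph]] := exists_reduced h.
exists p, s, t; split=> //; last exact: gp_equiv_cat_winv Hph Esthg.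
apply: reduced_cat => // p1 s' p2 Ep Hs'; rewrite /= Es.
have Hsh := shuffle_to_back p1 Hs'; rewrite -Ep in Hsh.
apply/andP; split.
  apply/eqP=> Ev; apply: Hnb; exists (sinv s'), (winv (p1 ++ p2)).
  rewrite -winv_rcons; split; first exact/reduced_winv/(reduced_shuffle Hp).
  split=> //; apply/gp_equiv_winv/(gp_equiv_trans _ Hph).
  exact/gp_equiv_sym/shuffle_gp_equiv.
apply/implyP => Hv; case: Hnl; rewrite Ep in Hp Hph.
by apply: ends_with_lk_shuffle_back Hp Hph Hs' _; rewrite adj_sym.
Qed.

End GraphProductWords.

Theorem mainTheorem5 (V : finType) (adj : rel V)
  (adj_sym : symmetric adj) (adj_irr : irreflexive adj)
  (G : V -> Grp) (g h : word G) (v : V) :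
  ~ ends_with_lk adj v h ->
  ((begins_with adj v (winv h) /\ ~ begins_with adj v (winv h ++ g)) ->
     exists (u : word G) (s : syllable G) (t : word G),
       reduced adj (u ++ s :: t) /\ gp_equiv adj (u ++ s :: t) g /\
       reduced adj (rcons u s) /\ gp_equiv adj (rcons u s) h /\
       svert s = v)
  /\
  ((begins_with adj v (winv h ++ g) /\ ~ begins_with adj v (winv h)) ->
     exists (u : word G) (s : syllable G) (t : word G),
       reduced adj (u ++ s :: t) /\ gp_equiv adj (u ++ s :: t) g /\
       reduced adj u /\ gp_equiv adj u h /\
       svert s = v).
Proof.
move=> Hnl; split=> [[Hb Hnb]|[Hb Hnb]].
  have [u [s [t [? ? ? ? ?]]]] := reduced_prefix_last_vertex adj_sym Hnl Hb Hnb.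
  by exists u, s, t.
have [u [s [t [? ? ? ? ?]]]] := reduced_prefix_next_vertex adj_sym Hnl Hb Hnb.
by exists u, s, t.
Qed.
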